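(* Let $k\ge2$. Then $\mathfrak a_kL_{k-1}=L_k\mathfrak a_k$ as operators $\mathbb R^{\Xi_{k-1}}\to\mathbb R^{\Xi_k}$.
   Context: $V$ is a finite set with symmetric non-negative weights $c_{xy}=c_{yx}\ge0$, $\alpha=(\alpha_x)$ positive. $\Xi_m:=\{\eta\in\mathbb N_0^V:\sum_x\eta_x=m\}$. $L_mf(\eta)=\sum_x\eta_x\sum_yc_{xy}(\alpha_y+\eta_y)(f(\eta-\delta_x+\delta_y)-f(\eta))$ for $f:\Xi_m\to\mathbb R$, where $\eta-\delta_x+\delta_y$ moves one particle from $x$ to $y$. $\mathfrak a_k g(\eta)=\sum_x\eta_x g(\eta-\delta_x)$ for $g:\Xi_{k-1}\to\mathbb R$, $\eta\in\Xi_k$. *)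

From mathcomp Require Import all_boot all_order all_algebra.
From mathcomp Require Import reals.
Set Implicit Arguments. Unset Strict Implicit. Unset Printing Implicit Defensive.
Import Order.TTheory GRing.Theory Num.Theory.

Definition config (V : finType) := {ffun V -> nat}.

(* total number of particles  sum_x eta_x ;  Xi_m = {eta | mass eta = m} *)
Definition mass (V : finType) (eta : config V) : nat := (\sum_(x : V) eta x)%N.

(* eta - delta_x + delta_y  (used only when eta_x >= 1) *)
Definition move (V : finType) (eta : config V) (x y : V) : config V :=
  [ffun z => ((eta z - (z == x)) + (z == y))%N].

(* eta - delta_x  (used only when eta_x >= 1) *)
Definition remove (V : finType) (eta : config V) (x : V) : config V :=
  [ffun z => (eta z - (z == x))%N].

Local Open Scope ring_scope.

Definition Lgen (R : realType) (V : finType) (c : V -> V -> R) (alpha : V -> R)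
  (f : config V -> R) (eta : config V) : R :=
  \sum_(x : V) (eta x)%:R *
     \sum_(y : V) c x y * (alpha y + (eta y)%:R) * (f (move eta x y) - f eta).

Definition acre (R : realType) (V : finType) (g : config V -> R) (eta : config V) : R :=
  \sum_(x : V) (eta x)%:R * g (remove eta x).

(* Write [L = \sum_(x, y) c x y * T_xy] with single-pair jump operators
   [T_xy g eta = eta_x (alpha_y + eta_y) (g (eta - d_x + d_y) - g eta)].
   Each [T_xy] almost commutes with the creation operator: the defect
   [a (T_xy g) - T_xy (a g)] is [eta_x eta_y (g (eta - d_y) - g (eta - d_x))],
   which is antisymmetric in [(x, y)], so it cancels once summed against the
   symmetric rates [c]. The identity thus holds for every configuration. *)
From mathcomp Require Import all_boot all_order all_algebra.
From mathcomp Require Import reals.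
From mathcomp Require Import ring zify.
Import Order.TTheory GRing.Theory Num.Theory.
Local Open Scope ring_scope.

Lemma sum_delta (R : pzRingType) (I : finType) (i : I) (F : I -> R) :
  \sum_j (j == i)%:R * F j = F i.
Proof.
rewrite (bigD1 i) //= eqxx mul1r big1 ?addr0 // => j /negbTE ->.
exact: mul0r.
Qed.

Lemma sum_antisym_eq0 (R : numDomainType) (I : finType) (a : I -> I -> R) :
  (forall i j, a j i = - a i j) -> \sum_i \sum_j a i j = 0.
Proof.
move=> a_antisym; set S := (X in X = 0).
have S_opp : S = - S.
  rewrite {1}/S exchange_big /S -sumrN; apply: eq_bigr => j _.
  by rewrite -sumrN; apply: eq_bigr => i _; apply: a_antisym.
by apply/eqP; rewrite -eqNr -S_opp.
Qed.

Section Configurations.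
Variable V : finType.
Implicit Types (eta : config V) (x y z w : V).

Lemma remove_move eta x y : remove (move eta x y) y = remove eta x.
Proof.
apply/ffunP => w; rewrite !ffunE.
by case: (w == y); rewrite ?addn1 ?addn0 ?subn1 ?subn0.
Qed.

Lemma move_remove eta x y z :
  (0 < eta z)%N -> (0 < remove eta z x)%N ->
  move (remove eta z) x y = remove (move eta x y) z.
Proof.
rewrite ffunE => ez rx; apply/ffunP => w; rewrite !ffunE.
have [->|_] := eqVneq w z; last by rewrite !subn0.
by move: rx; rewrite eq_sym; have [<-|_] := eqVneq z x; case: (z == y) => /=; lia.
Qed.

Lemma natr_remove (R : pzRingType) eta z w : (0 < eta z)%N ->
  (remove eta z w)%:R = (eta w)%:R - (w == z)%:R :> R.
Proof. by move=> ez; rewrite ffunE natrB //; case: eqP => // ->. Qed.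

Lemma natr_move (R : pzRingType) eta x y w : (0 < eta x)%N ->
  (move eta x y w)%:R = (eta w)%:R - (w == x)%:R + (w == y)%:R :> R.
Proof. by move=> ex; rewrite ffunE natrD natrB //; case: eqP => // ->. Qed.

End Configurations.

Section JumpOperators.
Variables (R : realType) (V : finType) (alpha : V -> R).
Implicit Types (eta : config V) (x y : V) (g : config V -> R).

Definition jump x y g eta : R :=
  (eta x)%:R * (alpha y + (eta y)%:R) * (g (move eta x y) - g eta).

Lemma Lgen_jump (c : V -> V -> R) g eta :
  Lgen c alpha g eta = \sum_x \sum_y c x y * jump x y g eta.
Proof.
rewrite /Lgen; apply: eq_bigr => x _; rewrite mulr_sumr; apply: eq_bigr => y _.
by rewrite /jump !mulrA [_ * c x y]mulrC.
Qed.

Lemma acre_Lgen (c : V -> V -> R) g eta :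
  acre (Lgen c alpha g) eta = \sum_x \sum_y c x y * acre (jump x y g) eta.
Proof.
rewrite /acre; under eq_bigr do rewrite Lgen_jump mulr_sumr.
rewrite exchange_big; apply: eq_bigr => x _.
under eq_bigr do rewrite mulr_sumr.
rewrite exchange_big; apply: eq_bigr => y _.
by rewrite mulr_sumr; apply: eq_bigr => z _; rewrite mulrCA.
Qed.

Lemma acre_jumpE x y g eta : acre (jump x y g) eta =
  \sum_z (eta z)%:R * ((eta x)%:R - (x == z)%:R)
           * (alpha y + ((eta y)%:R - (y == z)%:R))
           * (g (remove (move eta x y) z) - g (remove eta z)).
Proof.
rewrite /acre; apply: eq_bigr => z _.
have [->|ez] := posnP (eta z); first by rewrite !mul0r.
rewrite -!natr_remove // /jump.
have [->|rx] := posnP (remove eta z x); first by rewrite !(mul0r, mulr0).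
by rewrite move_remove // !mulrA.
Qed.

Lemma jump_acreE x y g eta : jump x y (acre g) eta =
  (eta x)%:R * (alpha y + (eta y)%:R) *
  \sum_z (((eta z)%:R - (z == x)%:R + (z == y)%:R) * g (remove (move eta x y) z)
          - (eta z)%:R * g (remove eta z)).
Proof.
rewrite /jump /acre; have [->|ex] := posnP (eta x); first by rewrite !mul0r.
by rewrite -sumrB; congr (_ * _); apply: eq_bigr => z _; rewrite natr_move.
Qed.

Lemma acre_jump x y g eta :
  acre (jump x y g) eta = jump x y (acre g) eta
    + (eta x)%:R * (eta y)%:R * (g (remove eta y) - g (remove eta x)).
Proof.
rewrite acre_jumpE jump_acreE.
set e := fun w => (eta w)%:R : R; set a := alpha y + e y.
set G := fun z => g (remove (move eta x y) z); set F := fun z => g (remove eta z).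
have Gy : G y = F x by rewrite /G /F remove_move.
have Gx : (x == y)%:R * (G x - F x) = 0 :> R.
  by case: eqP => [exy|_]; rewrite ?mul0r // {1}exy Gy subrr mulr0.
(* Once the products are expanded, every term not matching [jump x y (acre g)]
   carries a Kronecker delta at [z = x] or [z = y]. *)
transitivity (\sum_z (
    e x * a * ((e z - (z == x)%:R + (z == y)%:R) * G z - e z * F z)
  + (z == x)%:R * (e x * a * G z - e z * a * (G z - F z)
                   + (z == y)%:R * (G z - F z) * e z)
  + (z == y)%:R * (- e z * e x * (G z - F z) - e x * a * G z))).
  apply: eq_bigr => z _; rewrite /a /e /G /F /= [x == z]eq_sym [y == z]eq_sym.
  ring.
rewrite [in LHS]big_split [in LHS]big_split /= -mulr_sumr !sum_delta -addrA.
congr (_ + _).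
by rewrite Gx mul0r Gy /e /a /F; ring.
Qed.

End JumpOperators.

Theorem propositionA5 (R : realType) (V : finType) (c : V -> V -> R) (alpha : V -> R)
  (c_sym : forall x y, c x y = c y x)
  (c_ge0 : forall x y, 0 <= c x y)
  (alpha_gt0 : forall x, 0 < alpha x)
  (k : nat) (hk : (2 <= k)%N) (f : config V -> R) (eta : config V) :
  mass eta = k ->
  acre (Lgen c alpha f) eta = Lgen c alpha (acre f) eta.
Proof.
move=> _; rewrite acre_Lgen Lgen_jump.
under eq_bigr do under eq_bigr do rewrite acre_jump mulrDr.
under eq_bigr do rewrite big_split /=.
rewrite big_split /= [X in _ + X]sum_antisym_eq0 ?addr0 // => x y.
by rewrite c_sym; ring.
Qed.
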